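(* Let $\mathcal{G}$ be a directed graph and $k\neq j$ nodes such that the connection subgraph $\mathcal{C}_\mathcal{G}(k,j)$ is a directed tree with unit weight on every edge. Let $n$ be the length of a shortest directed path from $k$ to a node reachable from both $k$ and $j$, and $m$ the length of a shortest directed path from $j$ to a node reachable from both $k$ and $j$. Then $$r_{k,j}=2(n-m)+2^{3-n-m}\sum_{i=1}^{\lfloor (m+1)/2\rfloor} i\binom{n+m+2}{n+2i+1}.$$
   Context: A (weighted directed) graph has nonnegative adjacency matrix $A=[a_{i,j}]$ with $a_{i,j}>0$ iff there is an edge from $i$ to $j$ (weight $a_{i,j}$). Out-degree $d_k=\sum_j a_{k,j}$, $D=\mathrm{diag}(d_k)$, Laplacian $L=D-A$. A node is reachable from another if there is a directed path (possibly of length $0$) from the latter to the former. A graph is connected if it contains a node reachable from every node. For a connected graph on $N$ nodes: $\Pi=I_N-\frac1N\mathbf{1}_N\mathbf{1}_N^T$, $Q\in\mathbb{R}^{(N-1)\times N}$ with $Q\mathbf{1}_N=0$, $QQ^T=I_{N-1}$, $Q^TQ=\Pi$; $\overline L=QLQ^T$; $\Sigma$ the unique solution of $\overline L\Sigma+\Sigma\overline L^T=I_{N-1}$; $X=2Q^T\Sigma Q$; $r_{k,j}=x_{k,k}+x_{j,j}-2x_{k,j}$. A connection between $k$ and $j$ consists of two directed paths, one starting at $k$ and one at $j$, ending at a common node (one may be trivial). The connection subgraph $\mathcal{C}_\mathcal{G}(k,j)$ is a maximal connected subgraph of $\mathcal{G}$ in which every node and edge is part of a connection between $k$ and $j$;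 when unique, $r_{k,j}$ in $\mathcal{G}$ is by definition the effective resistance between $k$ and $j$ computed in $\mathcal{C}_\mathcal{G}(k,j)$. A directed tree is a graph whose underlying undirected graph is a tree and in which all edges are directed towards a single root (every non-root node has exactly one outgoing edge). Binomial coefficients are $\binom{a}{b}=\frac{a!}{b!(a-b)!}$ for $0\le b\le a$, and an empty sum is $0$. *)

(* Real numbers are modelled by an arbitrary real closed field. *)
From HB Require Import structures.
From mathcomp Require Import all_boot all_order all_algebra.
From Stdlib Require Import ClassicalEpsilon.
Set Implicit Arguments. Unset Strict Implicit. Unset Printing Implicit Defensive.
Import Order.TTheory GRing.Theory Num.Theory.
Local Open Scope ring_scope.

Definition pb (P : Prop) : bool :=
  if excluded_middle_informative P then true else false.

Section Graphs.
Variables (R : rcfType) (N : nat).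

Definition edge (A : 'M[R]_N) : rel 'I_N := fun a b => 0 < A a b.

Definition laplacian p (A : 'M[R]_p) : 'M[R]_p :=
  diag_mx (\row_i \sum_l A i l) - A.

(* r is the quantity r_{k,j} defined via the Lyapunov equation, for every
   admissible Q and the (unique) solution Sigma *)
Definition resistance_is p (A : 'M[R]_p) (k j : 'I_p) (r : R) : Prop :=
  forall (Q : 'M[R]_(p.-1, p)) (Sig : 'M[R]_(p.-1)),
    Q *m (const_mx 1 : 'cV[R]_p) = 0 ->
    Q *m Q^T = 1%:M ->
    Q^T *m Q = 1%:M - (p%:R)^-1 *: (const_mx 1 : 'M[R]_p) ->
    (Q *m laplacian A *m Q^T) *m Sig + Sig *m (Q *m laplacian A *m Q^T)^T
      = 1%:M ->
    let X := 2 *: (Q^T *m Sig *m Q) in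
    r = X k k + X j j - 2 * X k j.

Definition is_connection (A : 'M[R]_N) (k j : 'I_N) (p1 p2 : seq 'I_N) : bool :=
  [&& path (edge A) k p1, path (edge A) j p2, uniq (k :: p1), uniq (j :: p2)
    & last k p1 == last j p2].

Definition conn_node (A : 'M[R]_N) (k j v : 'I_N) : Prop :=
  exists p1 p2, is_connection A k j p1 p2 && ((v \in k :: p1) || (v \in j :: p2)).

Definition conn_edge (A : 'M[R]_N) (k j a b : 'I_N) : Prop :=
  exists p1 p2, is_connection A k j p1 p2 &&
    (((a, b) \in zip (k :: p1) p1) || ((a, b) \in zip (j :: p2) p2)).

Definition conn_nodes (A : 'M[R]_N) (k j : 'I_N) : {set 'I_N} :=
  [set v | pb (conn_node A k j v)].
Definition conn_rel (A : 'M[R]_N) (k j : 'I_N) : rel 'I_N :=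
  fun a b => pb (conn_edge A k j a b).

Definition subadj (A : 'M[R]_N) (S : {set 'I_N}) (E : rel 'I_N) : 'M[R]_#|S| :=
  \matrix_(a, b) if E (enum_val a) (enum_val b)
                 then A (enum_val a) (enum_val b) else 0.

Definition directed_tree (S : {set 'I_N}) (E : rel 'I_N) : Prop :=
  (forall a b, E a b -> (a \in S) && (b \in S)) /\
  exists2 r, r \in S &
    [/\ #|[set b | E r b]| = 0%N,
        forall v, v \in S -> v != r -> #|[set b | E v b]| = 1%N
      & forall v, v \in S -> connect E v r].

Definition common_reach (A : 'M[R]_N) (k j w : 'I_N) : bool :=
  connect (edge A) k w && connect (edge A) j w.

Definition shortest_to_common (A : 'M[R]_N) (k j src : 'I_N) (d : nat) : Prop :=
  (exists p, [&& path (edge A) src p, common_reach A k j (last src p)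
               & size p == d]) /\
  (forall p, path (edge A) src p -> common_reach A k j (last src p) ->
     (d <= size p)%N).

End Graphs.

Definition resistance_formula (R : rcfType) (n m : nat) : R :=
  2 * (n%:R - m%:R) +
  (2 : R) ^ (3 - (n : int) - (m : int)) *
  \sum_(1 <= i < (m.+1)./2.+1) (i * 'C(n + m + 2, n + 2 * i + 1))%:R.

From HB Require Import structures.
From mathcomp Require Import all_boot all_order all_algebra.
From mathcomp Require Import zify ring lra.
From Stdlib Require Import ClassicalEpsilon.
Set Implicit Arguments. Unset Strict Implicit. Unset Printing Implicit Defensive.
Import Order.TTheory GRing.Theory Num.Theory.

(* The proof has three parts.
   1. Binomial identities show that f is characterised by f(n,0) = 2n,
      f(0,m) = 2m and f(n+1,m+1) = (f(n,m+1) + f(n+1,m)) / 2.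
   2. For a rooted tree with Laplacian L, testing the Lyapunov equation on
      the vectors e_x - e_root gives a recursion for the kernel
      G(x,y) = (e_x - e_root)^T X (e_y - e_root); it forces G to be symmetric,
      G(x,y) = 2 depth(y) on ancestors y of x, and the resistance
      G(x,x) + G(y,y) - 2 G(x,y) to obey the same averaging recursion and
      boundary values as f, hence to equal f(n,m).
   3. In the graph, connections between k and j are paths of the tree and
      shortest paths to common descendants follow the parent map, so n and m
      are exactly the first-meeting step counts; re-indexing the subgraph by
      'I_#|S| reduces the theorem to part 2. *)

Lemma sum_nat_extend (lo K1 K2 : nat) (g : nat -> nat) :
  (K1 <= K2)%N -> (forall i, (K1 <= i)%N -> g i = 0%N) ->
  \sum_(lo <= i < K1) g i = \sum_(lo <= i < K2) g i.
Proof.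
move=> le12 g0; case: (leqP lo K1) => hlo.
  rewrite (@big_cat_nat _ _ _ K1 lo K2) //= [X in _ = _ + X]big1_seq ?addn0 //.
  by move=> i /andP[_]; rewrite mem_index_iota => /andP[/g0].
rewrite big_geq ?(ltnW hlo) //; rewrite big1_seq // => i /andP[_].
by rewrite mem_index_iota => /andP[hi _]; apply: g0; rewrite (leq_trans (ltnW hlo)).
Qed.

(* Sums of 'C(M, _) over odd and even lower indices, plain and weighted by
   the half-index; the truncation K is irrelevant as soon as M < K. *)
Definition odd_bin M K := \sum_(0 <= i < K) 'C(M, i.*2.+1).
Definition even_bin M K := \sum_(0 <= i < K) 'C(M, i.*2).
Definition odd_wbin M K := \sum_(0 <= i < K) i * 'C(M, i.*2.+1).
Definition even_wbin M K := \sum_(0 <= i < K) i * 'C(M, i.*2).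

Lemma bin_parity_pascal M K : (M.+1 < K)%N ->
  odd_bin M.+1 K = odd_bin M K + even_bin M K /\
  even_bin M.+1 K = even_bin M K + odd_bin M K.
Proof.
move=> hK; split.
  by rewrite /odd_bin /even_bin -big_split; apply: eq_bigr => i _; rewrite binS.
case: K hK => // K hK.
rewrite /even_bin /odd_bin (big_nat_recl _ _ (fun i => 'C(M.+1, i.*2))) //.
rewrite (big_nat_recl _ _ (fun i => 'C(M, i.*2))) // !bin0.
have -> : \sum_(0 <= i < K) 'C(M.+1, i.+1.*2) =
          \sum_(0 <= i < K) 'C(M, i.+1.*2) + \sum_(0 <= i < K) 'C(M, i.*2.+1).
  by rewrite -big_split; apply: eq_bigr => i _; rewrite doubleS binS.
have -> : \sum_(0 <= i < K) 'C(M, i.*2.+1) = \sum_(0 <= i < K.+1) 'C(M, i.*2.+1).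
  by apply: sum_nat_extend => // i hi; rewrite bin_small //; lia.
lia.
Qed.

Lemma bin_parity_sum M K : (M.+1 < K)%N ->
  odd_bin M.+1 K = 2 ^ M /\ even_bin M.+1 K = 2 ^ M.
Proof.
elim: M K => [|M IH] K hK.
  case: K hK => // [[|K]] // _.
  by rewrite /odd_bin /even_bin !big_nat_recl //= !big1_seq // => i _; rewrite bin_small.
have [-> ->] := bin_parity_pascal hK; have [-> ->] := IH K (ltnW hK).
by rewrite expnS; split; lia.
Qed.

Lemma wbin_parity_pascal M K : (M.+1 < K)%N ->
  odd_wbin M.+1 K = odd_wbin M K + even_wbin M K /\
  even_wbin M.+1 K = even_wbin M K + odd_wbin M K + odd_bin M K.
Proof.
move=> hK; split.
  rewrite /odd_wbin /even_wbin -big_split.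
  by apply: eq_bigr => i _; rewrite binS mulnDr.
case: K hK => // K hK.
rewrite /even_wbin /odd_wbin /odd_bin.
rewrite (big_nat_recl _ _ (fun i => i * 'C(M.+1, i.*2))) //.
rewrite (big_nat_recl _ _ (fun i => i * 'C(M, i.*2))) // !mul0n !add0n.
have -> : \sum_(0 <= i < K) i.+1 * 'C(M.+1, i.+1.*2) =
          \sum_(0 <= i < K) i.+1 * 'C(M, i.+1.*2) +
          (\sum_(0 <= i < K) i * 'C(M, i.*2.+1) + \sum_(0 <= i < K) 'C(M, i.*2.+1)).
  by rewrite -!big_split /=; apply: eq_bigr => i _; rewrite doubleS binS; lia.
have -> : \sum_(0 <= i < K) i * 'C(M, i.*2.+1) =
          \sum_(0 <= i < K.+1) i * 'C(M, i.*2.+1).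
  by apply: sum_nat_extend => // i hi; rewrite bin_small ?muln0 //; lia.
have -> : \sum_(0 <= i < K) 'C(M, i.*2.+1) = \sum_(0 <= i < K.+1) 'C(M, i.*2.+1).
  by apply: sum_nat_extend => // i hi; rewrite bin_small //; lia.
lia.
Qed.

(* Closed forms of the weighted sums (multiplied by 8 to stay in nat):
   odd_wbin (M+2) = M 2^(M-1) and even_wbin (M+2) = (M+2) 2^(M-1). *)
Lemma wbin_parity_sum M K : (M.+2 < K)%N ->
  8 * odd_wbin M.+2 K + 2 ^ M.+3 = M.+2 * 2 ^ M.+2 /\
  8 * even_wbin M.+2 K = M.+2 * 2 ^ M.+2.
Proof.
elim: M K => [|M IH] K hK.
  case: K hK => // [[|[|K]]] // _.
  rewrite /odd_wbin /even_wbin !big_nat_recl //= !big1_seq //= => i _.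
  by rewrite bin_small ?muln0.
have [-> ->] := wbin_parity_pascal hK; have [h3 h4] := IH K (ltnW hK).
have [-> _] := bin_parity_sum (M := M.+1) (ltnW hK).
by rewrite !expnS in h3 h4 *; split; lia.
Qed.

Definition formula_sum (n m : nat) : nat :=
  \sum_(1 <= i < (m.+1)./2.+1) i * 'C(n + m + 2, n + 2 * i + 1).

Lemma formula_sum_extend n m K : ((m.+1)./2 < K)%N ->
  formula_sum n m = \sum_(0 <= i < K) i * 'C(n + m + 2, n + 2 * i + 1).
Proof.
move=> hK; rewrite /formula_sum [RHS]big_ltn ?mul0n ?add0n; last lia.
by apply: sum_nat_extend => [|i hi]; [lia | rewrite bin_small ?muln0 //; lia].
Qed.

Lemma formula_sum_pascal n m :
  formula_sum n.+1 m.+1 = formula_sum n m.+1 + formula_sum n.+1 m.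
Proof.
rewrite !(@formula_sum_extend _ _ (m + 5)); try lia.
rewrite -big_split; apply: eq_bigr => i _.
have -> : (n.+1 + m.+1 + 2 = (n + m.+1 + 2).+1)%N by lia.
have -> : (n.+1 + 2 * i + 1 = (n + 2 * i + 1).+1)%N by lia.
by rewrite binS mulnDr addnC; congr (_ * 'C(_, _) + _ * 'C(_, _)); lia.
Qed.

Lemma formula_sum_n0 n : formula_sum n 0 = 0%N.
Proof. by rewrite /formula_sum big_geq. Qed.

Lemma formula_sum_0m m : 2 * formula_sum 0 m = m * 2 ^ m.
Proof.
rewrite (@formula_sum_extend _ _ (m + 5)); last lia.
have [h _] := @wbin_parity_sum m (m + 5) ltac:(lia).
have -> : \sum_(0 <= i < m + 5) i * 'C(0 + m + 2, 0 + 2 * i + 1) =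
          odd_wbin m.+2 (m + 5).
  by apply: eq_bigr => i _; rewrite add0n mul2n addn1 addnC.
by rewrite !expnS in h; lia.
Qed.

Local Open Scope ring_scope.

Lemma formulaE (R : rcfType) n m : resistance_formula R n m =
  2 * (n%:R - m%:R) + (2 : R) ^ (3 - (n : int) - (m : int)) * (formula_sum n m)%:R.
Proof. by rewrite /resistance_formula /formula_sum natr_sum. Qed.

Lemma pow2_shift (R : rcfType) (z : int) (t : nat) :
  (2 : R) ^ z * 2 ^+ t = 2 ^ (z + (t : int)).
Proof. by rewrite expfzDr ?pnatr_eq0. Qed.

Lemma formula_n0 (R : rcfType) n : resistance_formula R n 0 = 2 * n%:R.
Proof. by rewrite formulaE formula_sum_n0 mulr0 addr0 subr0. Qed.

Lemma formula_0m (R : rcfType) m : resistance_formula R 0 m = 2 * m%:R.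
Proof.
rewrite formulaE.
have -> : (formula_sum 0 m)%:R = (m%:R * 2 ^+ m / 2 : R).
  apply: (@mulIf _ 2); first by rewrite pnatr_eq0.
  by rewrite mulfVK ?pnatr_eq0 // -natrX -natrM -natrM mulnC formula_sum_0m.
have he := pow2_shift R (3 - (0%N : int) - (m : int)) m.
rewrite (_ : 3 - (0%N : int) - (m : int) + (m : int) = 3) in he; last by lia.
set e := (2 : R) ^ _ in he *.
have -> : e * (m%:R * 2 ^+ m / 2) = m%:R * (e * 2 ^+ m) / 2 by ring.
by rewrite he -exprnP; field.
Qed.

Lemma formula_pascal (R : rcfType) n m :
  resistance_formula R n.+1 m.+1 =
  (resistance_formula R n m.+1 + resistance_formula R n.+1 m) / 2.
Proof.
rewrite !formulaE formula_sum_pascal natrD.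
set z := 3 - (n.+1 : int) - (m.+1 : int).
have -> : 3 - (n : int) - (m.+1 : int) = z + (1%N : int) by rewrite /z; lia.
have -> : 3 - (n.+1 : int) - (m : int) = z + (1%N : int) by rewrite /z; lia.
by rewrite -!pow2_shift expr1 !mulrS; field.
Qed.

Section RootedTree.
Variables (T : eqType) (rho : T) (par : T -> T) (depth : T -> nat).
Hypothesis par_root : par rho = rho.
Hypothesis depth_root : depth rho = 0%N.
Hypothesis depth_par : forall x, x != rho -> depth x = (depth (par x)).+1.

Lemma depth_parent x : depth (par x) = (depth x).-1.
Proof.
by case: (eqVneq x rho) => [->|hx]; [rewrite par_root depth_root | rewrite (depth_par hx)].
Qed.

Lemma depth_iter x t : depth (iter t par x) = (depth x - t)%N.
Proof. by elim: t => [|t IH]; rewrite ?subn0 // iterS depth_parent IH subnS. Qed.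

Lemma iter_root t : iter t par rho = rho.
Proof. by elim: t => // t IH; rewrite iterS IH par_root. Qed.

Lemma depth_pair_ind (P : T -> T -> Prop) :
  (forall x y, (forall x' y', (depth x' + depth y' < depth x + depth y)%N ->
                 P x' y') -> P x y) ->
  forall x y, P x y.
Proof.
move=> step x y; have [d] := ubnP (depth x + depth y).
elim: d x y => // d IH x y hd; apply: step => x' y' hlt; apply: IH; lia.
Qed.

Variable R : rcfType.

Lemma harmonic_kernel_zero (H : T -> T -> R) :
  (forall y, H rho y = 0) -> (forall x, H x rho = 0) ->
  (forall x y, x != rho -> y != rho -> 2 * H x y = H (par x) y + H x (par y)) ->
  forall x y, H x y = 0.
Proof.
move=> H_l H_r hrec; apply: depth_pair_ind => x y IH.
case: (eqVneq x rho) => [->|hx]; first exact: H_l.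
case: (eqVneq y rho) => [->|hy]; first exact: H_r.
have e1 : H (par x) y = 0 by apply: IH; rewrite (depth_par hx); lia.
have e2 : H x (par y) = 0 by apply: IH; rewrite (depth_par hy); lia.
by move: (hrec x y hx hy); rewrite e1 e2 addr0 => /eqP; rewrite mulf_eq0 pnatr_eq0 => /eqP.
Qed.

Section Kernel.
(* A symmetric kernel vanishing on the root and satisfying the recursion
   G_rec; it will be the Gram kernel (e_x - e_rho)^T X (e_y - e_rho), for
   which G_rec is the Lyapunov equation. *)
Variable G : T -> T -> R.
Hypothesis G_root : forall x, G x rho = 0.
Hypothesis G_sym : forall x y, G x y = G y x.
Hypothesis G_rec : forall x y, x != rho -> y != rho ->
  2 * G x y = G (par x) y + G x (par y) + 2 * ((x == y)%:R + 1).

Lemma kernel_ancestor x t : G x (iter t par x) = 2 * (depth (iter t par x))%:R.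
Proof.
pose P x y := forall t, y = iter t par x -> G x y = 2 * (depth y)%:R.
suff: P x (iter t par x) by apply.
move: x (iter t par x); apply: depth_pair_ind => {}x y IH {}t ey.
case: (eqVneq y rho) => [->|hy]; first by rewrite G_root depth_root mulr0.
have hx : x != rho by apply: contraNneq hy => ex; rewrite ey ex iter_root.
have hDy := depth_par hy; have hDx := depth_par hx.
have hDyx : depth y = (depth x - t)%N by rewrite ey depth_iter.
have e2 : G x (par y) = 2 * (depth (par y))%:R.
  by apply: (IH x _ _ t.+1); [lia | rewrite ey iterS].
apply: (@mulfI _ 2); first by rewrite pnatr_eq0.
case: t ey hDyx => [|t] ey hDyx.
  rewrite /= in ey; subst y.
  rewrite G_rec // (G_sym (par x)) e2 eqxx hDy -[(depth (par x)).+1]addn1 natrD /=.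
  ring.
have e1 : G (par x) y = 2 * (depth y)%:R.
  by apply: (IH _ _ _ t); [lia | rewrite ey iterSr].
have hxy : x != y by apply/eqP => exy; move: hDyx; rewrite -exy; lia.
rewrite G_rec // e1 e2 (negbTE hxy) hDy -[(depth (par y)).+1]addn1 natrD /=; ring.
Qed.

Lemma kernel_diag x : G x x = 2 * (depth x)%:R.
Proof. exact: (kernel_ancestor x 0). Qed.

Definition kernel_res x y := G x x + G y y - 2 * G x y.

Lemma kernel_res_sym x y : kernel_res x y = kernel_res y x.
Proof. by rewrite /kernel_res (G_sym x y); ring. Qed.

Lemma kernel_res_ancestor x t :
  kernel_res x (iter t par x) = 2 * ((depth x)%:R - (depth (iter t par x))%:R).
Proof. by rewrite /kernel_res !kernel_diag kernel_ancestor; ring. Qed.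

Lemma kernel_res_rec x y : x != y -> x != rho -> y != rho ->
  2 * kernel_res x y = kernel_res (par x) y + kernel_res x (par y).
Proof.
move=> hxy hx hy; rewrite /kernel_res !kernel_diag.
have h1 := G_rec hx hy; have h2 := G_rec hy hx.
rewrite (negbTE hxy) in h1; rewrite eq_sym (negbTE hxy) in h2.
rewrite (G_sym y (par x)) (G_sym (par y) x) in h2.
rewrite (depth_par hx) (depth_par hy) -[(depth (par x)).+1]addn1.
rewrite -[(depth (par y)).+1]addn1 !natrD /= in h1 *.
lra.
Qed.

(* If a and b first meet after n and m parent steps, the resistance between
   them is the closed formula: both satisfy the same boundary values and the
   same averaging recursion. *)
Lemma kernel_res_meet (a b : T) (n m : nat) :
  iter n par a = iter m par b -> (n <= depth a)%N -> (m <= depth b)%N ->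
  (forall i l, (i < n)%N -> (l < m)%N -> iter i par a != iter l par b) ->
  kernel_res a b = resistance_formula R n m.
Proof.
move=> hc hna hmb hne.
suff H : forall u v, (u <= n)%N -> (v <= m)%N ->
  kernel_res (iter (n - u) par a) (iter (m - v) par b) = resistance_formula R u v.
  by have := H n m (leqnn _) (leqnn _); rewrite !subnn.
elim=> [|u IHu] v hu hv.
  rewrite subn0 formula_0m hc kernel_res_sym.
  have -> : iter m par b = iter v par (iter (m - v) par b) by rewrite -iterD subnKC.
  rewrite kernel_res_ancestor !depth_iter -natrB; last lia.
  by congr (_ * _%:R); lia.
elim: v hv => [|v IHv] hv.
  rewrite subn0 formula_n0 -hc.
  have -> : iter n par a = iter u.+1 par (iter (n - u.+1) par a).
    by rewrite -iterD subnKC.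
  rewrite kernel_res_ancestor !depth_iter -natrB; last lia.
  by congr (_ * _%:R); lia.
set x := iter (n - u.+1) par a; set y := iter (m - v.+1) par b.
have hx : x != rho.
  by apply/eqP => e; have := depth_iter a (n - u.+1); rewrite -/x e depth_root; lia.
have hy : y != rho.
  by apply/eqP => e; have := depth_iter b (m - v.+1); rewrite -/y e depth_root; lia.
have hxy : x != y by apply: hne; lia.
have px : par x = iter (n - u) par a.
  by rewrite /x -iterS; have -> : (n - u = (n - u.+1).+1)%N by lia.
have py : par y = iter (m - v) par b.
  by rewrite /y -iterS; have -> : (m - v = (m - v.+1).+1)%N by lia.
apply: (@mulfI _ 2); first by rewrite pnatr_eq0.
rewrite kernel_res_rec // formula_pascal mulrC divfK ?pnatr_eq0 //.
by rewrite px py IHu ?IHv //; lia.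
Qed.
End Kernel.
End RootedTree.

Section TreeLaplacian.
Variables (R : rcfType) (p : nat) (Adj : 'M[R]_p) (rho : 'I_p) (par : 'I_p -> 'I_p).
Hypothesis Adj_tree : forall x i, Adj x i = ((x != rho) && (i == par x))%:R.
Hypothesis par_root : par rho = rho.

Local Notation L := (laplacian Adj).

Definition unit_vec (x : 'I_p) : 'cV[R]_p := delta_mx x 0.
Definition root_diff (x : 'I_p) : 'cV[R]_p := unit_vec x - unit_vec rho.
Definition form (M : 'M[R]_p) (u v : 'cV[R]_p) : R := (u^T *m M *m v) 0 0.

Lemma outdeg_tree x : \sum_l Adj x l = (x != rho)%:R.
Proof.
case: (eqVneq x rho) => [->|hx] /=.
  by rewrite big1 // => l _; rewrite Adj_tree eqxx.
rewrite (bigD1 (par x)) //= big1 ?addr0; first by rewrite Adj_tree hx eqxx.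
by move=> l hl; rewrite Adj_tree hx /= (negbTE hl).
Qed.

Lemma laplacianT_root_diff x : L^T *m root_diff x = root_diff x - root_diff (par x).
Proof.
apply/matrixP => i z; rewrite /root_diff mulmxBr /unit_vec -!colE !mxE.
rewrite !outdeg_tree !Adj_tree ord1 eqxx !eqxx !andbT mul0rn subrr subr0 /=.
case: (eqVneq x rho) => [->|hx] /=.
  by rewrite par_root; case: (rho == i); case: (i == rho) => /=; ring.
by rewrite [x == i]eq_sym; case: (i == x); case: (i == par x); case: (i == rho) => /=;
  ring.
Qed.

Lemma form_subl M u1 u2 v : form M (u1 - u2) v = form M u1 v - form M u2 v.
Proof. by rewrite /form raddfB /= !mulmxBl !mxE. Qed.

Lemma form_subr M u v1 v2 : form M u (v1 - v2) = form M u v1 - form M u v2.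
Proof. by rewrite /form !mulmxBr !mxE. Qed.

Lemma form_unit M x y : form M (unit_vec x) (unit_vec y) = M x y.
Proof. by rewrite /form /unit_vec trmx_delta -rowE -colE !mxE. Qed.

Lemma root_diff_root : root_diff rho = 0.
Proof. by rewrite /root_diff subrr. Qed.

Lemma form_0l M v : form M 0 v = 0.
Proof. by rewrite /form trmx0 !mul0mx mxE. Qed.

Lemma form_0r M u : form M u 0 = 0.
Proof. by rewrite /form !mulmx0 mxE. Qed.

Lemma form_root_diff M x y :
  form M (root_diff x) (root_diff y) = M x y - M x rho - M rho y + M rho rho.
Proof. by rewrite /root_diff !(form_subl, form_subr) !form_unit; ring. Qed.

Lemma root_diff_gram x y : x != rho -> y != rho ->
  form 1%:M (root_diff x) (root_diff y) = (x == y)%:R + 1.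
Proof.
move=> hx hy; rewrite form_root_diff !mxE eqxx (negbTE hx) [rho == y]eq_sym.
by rewrite (negbTE hy) /=; case: (x == y) => /=; ring.
Qed.

Lemma const_root_diff x : (const_mx 1 : 'M[R]_p) *m root_diff x = 0.
Proof.
by apply/matrixP => i z; rewrite /root_diff mulmxBr /unit_vec -!colE !mxE subrr.
Qed.

Lemma root_symmetric (M : 'M[R]_p) :
  (forall x, \sum_y M x y = 0) -> (forall x, \sum_y M y x = 0) ->
  (forall x y, form M (root_diff x) (root_diff y) = form M (root_diff y) (root_diff x)) ->
  forall x, M x rho = M rho x.
Proof.
move=> rowS colS Msym x.
have : \sum_y (form M (root_diff x) (root_diff y) - form M (root_diff y) (root_diff x)) = 0.
  by rewrite big1 // => y _; rewrite Msym subrr.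
under eq_bigr do rewrite !form_root_diff.
have e i : M x i - M x rho - M rho i + M rho rho -
    (M i x - M i rho - M rho x + M rho rho) =
    ((M x i - M rho i) - (M i x - M i rho)) + (M rho x - M x rho) by ring.
under eq_bigr do rewrite e.
rewrite big_split /= !sumrB rowS colS (rowS rho) (colS rho) !subrr add0r.
rewrite !sumr_const card_ord => h; apply/eqP; rewrite eq_sym -subr_eq0; apply/eqP.
have hp : (p%:R : R) != 0 by rewrite pnatr_eq0 -lt0n (leq_ltn_trans _ (ltn_ord rho)).
by apply: (mulIf hp); rewrite mul0r -h mulr_natr mulrnBl.
Qed.

Lemma row_sum_const (M : 'M[R]_p) x :
  M *m (const_mx 1 : 'cV[R]_p) = 0 -> \sum_y M x y = 0.
Proof.
move/matrixP/(_ x 0); rewrite [in X in _ = X -> _]mxE => h.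
by rewrite -[RHS]h mxE; apply: eq_bigr => y _; rewrite mxE mulr1.
Qed.

Lemma col_sum_const (M : 'M[R]_p) x :
  (const_mx 1 : 'rV[R]_p) *m M = 0 -> \sum_y M y x = 0.
Proof.
move/matrixP/(_ 0 x); rewrite [in X in _ = X -> _]mxE => h.
by rewrite -[RHS]h mxE; apply: eq_bigr => y _; rewrite mxE mul1r.
Qed.

Section Lyapunov.
(* Q is an orthonormal basis of the complement of the constant vector and
   Sig solves the projected Lyapunov equation; X = 2 Q^T Sig Q. *)
Variables (Q : 'M[R]_(p.-1, p)) (Sig : 'M[R]_(p.-1)).
Hypothesis Q_const : Q *m (const_mx 1 : 'cV[R]_p) = 0.
Hypothesis QTQ : Q^T *m Q = 1%:M - (p%:R)^-1 *: const_mx 1.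
Hypothesis lyap : (Q *m L *m Q^T) *m Sig + Sig *m (Q *m L *m Q^T)^T = 1%:M.

Local Notation X := (2 *: (Q^T *m Sig *m Q)).

(* The vectors e_x - e_rho are orthogonal to the constant vector, so the
   projection Q^T Q fixes them. *)
Lemma proj_root_diff x : Q^T *m (Q *m root_diff x) = root_diff x.
Proof.
by rewrite mulmxA QTQ mulmxBl mul1mx -scalemxAl const_root_diff scaler0 subr0.
Qed.

Lemma proj_root_diffT x : (root_diff x)^T *m Q^T *m Q = (root_diff x)^T.
Proof. by rewrite -[RHS](congr1 trmx (proj_root_diff x)) !trmx_mul trmxK. Qed.

(* The Lyapunov equation tested against e_x - e_rho and e_y - e_rho. *)
Lemma lyapunov_form x y :
  form X (root_diff x - root_diff (par x)) (root_diff y) +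
  form X (root_diff x) (root_diff y - root_diff (par y)) =
  2 * form 1%:M (root_diff x) (root_diff y).
Proof.
rewrite -!laplacianT_root_diff /form.
set u := root_diff x; set v := root_diff y.
have E := congr1 (fun M => u^T *m (Q^T *m M *m Q) *m v) lyap.
rewrite /= mulmxDr mulmxDl mulmxDr mulmxDl mulmx1 in E.
have T1 : u^T *m (Q^T *m (Q *m L *m Q^T *m Sig) *m Q) *m v =
          u^T *m L *m (Q^T *m Sig *m Q) *m v by rewrite !mulmxA proj_root_diffT.
have T2 : u^T *m (Q^T *m (Sig *m (Q *m L *m Q^T)^T) *m Q) *m v =
          u^T *m (Q^T *m Sig *m Q) *m L^T *m v.
  rewrite !trmx_mul trmxK !mulmxA -[_ *m Q *m v]mulmxA.
  by rewrite -[_ *m Q^T *m (Q *m v)]mulmxA proj_root_diff.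
have T3 : u^T *m (Q^T *m Q) *m v = u^T *m v by rewrite mulmxA proj_root_diffT.
rewrite T1 T2 T3 in E.
have addE (A B : 'M[R]_1) : (A + B) 0 0 = A 0 0 + B 0 0 by rewrite mxE.
have sclE (c : R) (A : 'M[R]_1) : (c *: A) 0 0 = c * A 0 0 by rewrite mxE.
rewrite -addE -sclE; congr (fun M : 'M[R]_1 => M 0 0).
rewrite !trmx_mul trmxK mulmx1 -!scalemxAr -!scalemxAl -scalerDr.
by rewrite -E !mulmxA.
Qed.

Lemma gram_row_sum x : \sum_y X x y = 0.
Proof.
by apply: row_sum_const; rewrite -scalemxAl -!mulmxA Q_const !mulmx0 scaler0.
Qed.

Lemma gram_col_sum x : \sum_y X y x = 0.
Proof.
have h1 : (const_mx 1 : 'rV[R]_p) *m Q^T = 0.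
  have -> : (const_mx 1 : 'rV[R]_p) = (const_mx 1 : 'cV[R]_p)^T by rewrite trmx_const.
  by rewrite -trmx_mul Q_const trmx0.
by apply: col_sum_const; rewrite -scalemxAr !mulmxA h1 !mul0mx scaler0.
Qed.

Definition gram_kernel x y := form X (root_diff x) (root_diff y).

Lemma gram_kernel_step x y : x != rho -> y != rho ->
  (gram_kernel x y - gram_kernel (par x) y) + (gram_kernel x y - gram_kernel x (par y)) =
  2 * ((x == y)%:R + 1).
Proof.
move=> hx hy; rewrite -(root_diff_gram hx hy) -lyapunov_form /gram_kernel.
by rewrite (form_subl _ (root_diff x)) (form_subr _ _ (root_diff y)).
Qed.

Section Depth.
Variable depth : 'I_p -> nat.
Hypothesis depth_root : depth rho = 0%N.
Hypothesis depth_par : forall x, x != rho -> depth x = (depth (par x)).+1.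

Lemma gram_kernel_root x : gram_kernel x rho = 0.
Proof. by rewrite /gram_kernel root_diff_root form_0r. Qed.

(* Symmetry of the kernel: its antisymmetric part is harmonic, hence zero. *)
Lemma gram_kernel_sym x y : gram_kernel x y = gram_kernel y x.
Proof.
apply/eqP; rewrite -subr_eq0; apply/eqP; move: x y.
apply: (harmonic_kernel_zero depth_root depth_par
  (H := fun x y => gram_kernel x y - gram_kernel y x)) => [y|x|x y hx hy] /=.
- by rewrite gram_kernel_root /gram_kernel root_diff_root form_0l subrr.
- by rewrite gram_kernel_root /gram_kernel root_diff_root form_0l subrr.
have h1 := gram_kernel_step hx hy; have h2 := gram_kernel_step hy hx.
rewrite eq_sym in h2; lra.
Qed.

Lemma gram_kernel_rec x y : x != rho -> y != rho ->
  2 * gram_kernel x y =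
  gram_kernel (par x) y + gram_kernel x (par y) + 2 * ((x == y)%:R + 1).
Proof. by move=> hx hy; have := gram_kernel_step hx hy; lra. Qed.

Lemma gram_resistance (a b : 'I_p) (n m : nat) :
  iter n par a = iter m par b -> (n <= depth a)%N -> (m <= depth b)%N ->
  (forall i l, (i < n)%N -> (l < m)%N -> iter i par a != iter l par b) ->
  X a a + X b b - 2 * X a b = resistance_formula R n m.
Proof.
move=> meet hna hmb hne.
have symX := root_symmetric gram_row_sum gram_col_sum gram_kernel_sym.
rewrite -(kernel_res_meet par_root depth_root depth_par gram_kernel_root
  gram_kernel_sym gram_kernel_rec meet hna hmb hne).
rewrite /kernel_res /gram_kernel !form_root_diff.
by have := symX a; have := symX b; lra.
Qed.
End Depth.
End Lyapunov.

Lemma tree_resistance (depth : 'I_p -> nat) (a b : 'I_p) (n m : nat) :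
  depth rho = 0%N -> (forall x, x != rho -> depth x = (depth (par x)).+1) ->
  iter n par a = iter m par b -> (n <= depth a)%N -> (m <= depth b)%N ->
  (forall i l, (i < n)%N -> (l < m)%N -> iter i par a != iter l par b) ->
  resistance_is Adj a b (resistance_formula R n m).
Proof.
move=> depth_root depth_par meet hna hmb hne Q Sig Q_const _ QTQ lyap /=.
by rewrite (gram_resistance Q_const QTQ lyap depth_root depth_par meet hna hmb hne).
Qed.
End TreeLaplacian.

Lemma pbE (P : Prop) : pb P <-> P.
Proof. by rewrite /pb; case: excluded_middle_informative. Qed.

Lemma zip_path (T : eqType) (e : rel T) x s :
  (forall a b, (a, b) \in zip (x :: s) s -> e a b) -> path e x s.
Proof.
elim: s x => // y s IH x h /=; apply/andP; split.
  by apply: h; rewrite /= inE eqxx.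
by apply: IH => a b hab; apply: h; rewrite /= inE hab orbT.
Qed.

Lemma connect_uniq_path (T : finType) (e : rel T) a w : connect e a w ->
  exists q, [/\ path e a q, uniq (a :: q) & last a q = w].
Proof.
by case/connectP => q hq ->; case: (shortenP hq) => q' hq' hu _; exists q'.
Qed.

Section ConnectionTree.
Variables (R : rcfType) (N : nat) (A : 'M[R]_N) (k j : 'I_N).
Local Notation S := (conn_nodes A k j).
Local Notation E := (conn_rel A k j).
Hypothesis E_nodes : forall a b, E a b -> (a \in S) && (b \in S).
Variable r : 'I_N.
Hypothesis r_in : r \in S.
Hypothesis r_sink : #|[set b | E r b]| = 0%N.
Hypothesis out_one : forall v, v \in S -> v != r -> #|[set b | E v b]| = 1%N.
Hypothesis reach_r : forall v, v \in S -> connect E v r.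
Hypothesis E_unit : forall a b, E a b -> A a b = 1%R.
Hypothesis k_in : k \in S.
Hypothesis j_in : j \in S.

Definition tree_par v := odflt r [pick b | E v b].

Lemma no_edge_root b : ~~ E r b.
Proof.
by apply/negP => h; move/setP/(_ b): (cards0_eq r_sink); rewrite !inE h.
Qed.

Lemma tree_par_root : tree_par r = r.
Proof. by rewrite /tree_par; case: pickP => // b; rewrite (negbTE (no_edge_root b)). Qed.

Lemma edge_tree_par a b : E a b -> b = tree_par a /\ a != r.
Proof.
move=> h; have ar : a != r by apply: contraTneq h => ->; apply: no_edge_root.
have /andP[aS _] := E_nodes h.
split=> //; rewrite /tree_par; case: pickP => [b' hb'|/(_ b)]; last by rewrite h.
have /cards1P [c hc] : #|[set b | E a b]| == 1%N by rewrite out_one.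
have : b \in [set b | E a b] by rewrite inE.
have : b' \in [set b | E a b] by rewrite inE.
by rewrite hc !inE => /eqP -> /eqP ->.
Qed.

Lemma tree_par_edge v : v \in S -> v != r -> E v (tree_par v).
Proof.
move=> vS vr; rewrite /tree_par; case: pickP => // /= h0.
have := out_one vS vr; rewrite (_ : [set b | E v b] = set0) ?cards0 //.
by apply/setP => b; rewrite !inE h0.
Qed.

Lemma tree_par_in v : v \in S -> tree_par v \in S.
Proof.
move=> vS; case: (eqVneq v r) => [->|vr]; first by rewrite tree_par_root.
by have /andP[] := E_nodes (tree_par_edge vS vr).
Qed.

Lemma iter_tree_par_in t v : v \in S -> iter t tree_par v \in S.
Proof. by move=> vS; elim: t => // t IH; rewrite iterS tree_par_in. Qed.

Lemma tree_path_last v s : path E v s -> last v s = iter (size s) tree_par v.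
Proof.
elim: s v => // y s IH v /= /andP[hvy hp].
have [ey _] := edge_tree_par hvy; subst y.
by rewrite -iterS iterSr IH.
Qed.

Definition tree_depth v : nat :=
  match excluded_middle_informative (exists t, iter t tree_par v == r) with
  | left h => ex_minn h
  | right _ => 0%N
  end.

Lemma tree_depth_spec v : v \in S -> iter (tree_depth v) tree_par v = r /\
  forall t, iter t tree_par v = r -> (tree_depth v <= t)%N.
Proof.
move=> vS; rewrite /tree_depth; case: excluded_middle_informative => [h|[]].
  by case: ex_minnP => t /eqP ht hmin; split=> // t' /eqP; apply: hmin.
have /connectP [s hs hl] := reach_r vS.
by exists (size s); rewrite -tree_path_last // -hl.
Qed.

Lemma tree_depth_root : tree_depth r = 0%N.
Proof. by have [_ h] := tree_depth_spec r_in; have := h 0%N erefl; lia. Qed.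

Lemma tree_depth0 v : v \in S -> tree_depth v = 0%N -> v = r.
Proof. by move=> vS h; have [] := tree_depth_spec vS; rewrite h. Qed.

Lemma tree_depth_par v : v \in S -> v != r -> tree_depth v = (tree_depth (tree_par v)).+1.
Proof.
move=> vS vr; have pS := tree_par_in vS.
have [h1 h2] := tree_depth_spec vS; have [h3 h4] := tree_depth_spec pS.
have a1 : (tree_depth v <= (tree_depth (tree_par v)).+1)%N by apply: h2; rewrite iterSr.
have a2 : tree_depth v != 0%N by apply: contra_neq vr; apply: tree_depth0.
have a3 : (tree_depth (tree_par v) <= (tree_depth v).-1)%N.
  by apply: h4; rewrite -iterSr prednK ?lt0n.
lia.
Qed.

Lemma tree_depth_iter v t : v \in S -> tree_depth (iter t tree_par v) = (tree_depth v - t)%N.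
Proof.
move=> vS; elim: t => [|t IH]; first by rewrite subn0.
rewrite iterS; have itS := iter_tree_par_in t vS.
case: (eqVneq (iter t tree_par v) r) => [e|ne].
  by rewrite e tree_par_root tree_depth_root; rewrite e tree_depth_root in IH; lia.
by rewrite (tree_depth_par itS ne) in IH; lia.
Qed.

Lemma tree_graph_path v t : v \in S -> (t <= tree_depth v)%N ->
  exists s, [/\ path (edge A) v s, size s = t & last v s = iter t tree_par v].
Proof.
elim: t v => [|t IH] v vS ht; first by exists [::].
have vr : v != r by apply: contraTneq ht => ->; rewrite tree_depth_root.
have hD := tree_depth_par vS vr.
have [s [h1 h2 h3]] := IH (tree_par v) (tree_par_in vS) ltac:(lia).
exists (tree_par v :: s); split => /=; last by rewrite h3 -iterS iterSr.
  by rewrite h1 /edge E_unit ?ltr01 ?tree_par_edge.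
by rewrite h2.
Qed.

Lemma tree_reach v t : v \in S -> (t <= tree_depth v)%N ->
  connect (edge A) v (iter t tree_par v).
Proof.
by move=> vS ht; have [s [hs _ hl]] := tree_graph_path vS ht; apply/connectP; exists s.
Qed.

Lemma root_common : common_reach A k j r.
Proof.
have [hk _] := tree_depth_spec k_in; have [hj _] := tree_depth_spec j_in.
by apply/andP; split; [rewrite -hk | rewrite -hj]; apply: tree_reach.
Qed.

Lemma shortest_depth src d : src \in S -> shortest_to_common A k j src d ->
  (d <= tree_depth src)%N /\
  forall l, (l < d)%N -> ~~ common_reach A k j (iter l tree_par src).
Proof.
move=> sS [_ hmin].
have [s [h1 h2 h3]] := tree_graph_path sS (leqnn _).
have dle : (d <= tree_depth src)%N.
  by rewrite -h2; apply: hmin; rewrite // h3; case: (tree_depth_spec sS) => -> _;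
    exact: root_common.
split=> // l hl; apply/negP => hc.
have [s' [h1' h2' h3']] := tree_graph_path sS (ltnW (leq_trans hl dle)).
by have := hmin s' h1'; rewrite h3' => /(_ hc); lia.
Qed.

(* The two branches of a connection are tree paths, so their common end is
   reached from k and from j by iterating the parent map. *)
Lemma connection_iter p q : is_connection A k j p q ->
  last k p = iter (size p) tree_par k /\ last j q = iter (size q) tree_par j.
Proof.
move=> hc; split; apply: tree_path_last; apply: zip_path => a b hab;
  apply/pbE; exists p, q; by rewrite hc hab ?orbT.
Qed.

Lemma shortest_uniq src d : shortest_to_common A k j src d ->
  exists p, [/\ path (edge A) src p, uniq (src :: p),
                common_reach A k j (last src p) & size p = d].
Proof.
case=> [[p /and3P[hp hc /eqP hsz]] hmin]; case: (shortenP hp) hc => p' hp' hu sub_p hc.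
exists p'; split=> //; apply/eqP; rewrite eqn_leq hmin // andbT -hsz.
by apply: uniq_leq_size sub_p; case/andP: hu.
Qed.

Lemma shortest_from_k n : shortest_to_common A k j k n ->
  common_reach A k j (iter n tree_par k) /\
  exists t, iter n tree_par k = iter t tree_par j.
Proof.
move=> /shortest_uniq [p [hp hu hc hsz]].
have [q [hq huq hl]] := connect_uniq_path (proj2 (andP hc)).
have [e1 e2] : last k p = iter n tree_par k /\ last j q = iter (size q) tree_par j.
  by rewrite -hsz; apply: connection_iter; rewrite /is_connection hp hq hu huq hl eqxx.
by rewrite -e1; split=> //; exists (size q); rewrite -e2.
Qed.

Lemma shortest_from_j m : shortest_to_common A k j j m ->
  common_reach A k j (iter m tree_par j) /\
  exists t, iter m tree_par j = iter t tree_par k.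
Proof.
move=> /shortest_uniq [p [hp hu hc hsz]].
have [q [hq huq hl]] := connect_uniq_path (proj1 (andP hc)).
have [e1 e2] : last k q = iter (size q) tree_par k /\ last j p = iter m tree_par j.
  by rewrite -hsz; apply: connection_iter; rewrite /is_connection hp hq hu huq hl eqxx.
by rewrite -e2; split=> //; exists (size q); rewrite -e1.
Qed.

Lemma first_meeting n m :
  shortest_to_common A k j k n -> shortest_to_common A k j j m ->
  [/\ iter n tree_par k = iter m tree_par j, (n <= tree_depth k)%N,
      (m <= tree_depth j)%N &
      forall i l, (i < n)%N -> (l < m)%N -> iter i tree_par k != iter l tree_par j].
Proof.
move=> hk hj.
have [n_le before_n] := shortest_depth k_in hk.
have [m_le before_m] := shortest_depth j_in hj.
have [ck [t1 e1]] := shortest_from_k hk; have [cj [t2 e2]] := shortest_from_j hj.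
have m_t1 : (m <= t1)%N by rewrite leqNgt; apply/negP => /before_m; rewrite -e1 ck.
have n_t2 : (n <= t2)%N by rewrite leqNgt; apply/negP => /before_n; rewrite -e2 cj.
have d1 := congr1 tree_depth e1; have d2 := congr1 tree_depth e2.
rewrite !tree_depth_iter // in d1 d2.
split=> // [|i l hi hl].
  case: (posnP (tree_depth k - n)) => [hz|hpos]; last by rewrite e1; congr iter; lia.
  have kr : iter n tree_par k = r.
    by apply: (tree_depth0 (iter_tree_par_in n k_in)); rewrite tree_depth_iter.
  have jr : iter m tree_par j = r.
    by apply: (tree_depth0 (iter_tree_par_in m j_in)); rewrite tree_depth_iter //; lia.
  by rewrite kr jr.
have reach_k := tree_reach k_in (ltnW (leq_trans hi n_le)).
have reach_j := tree_reach j_in (ltnW (leq_trans hl m_le)).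
by apply/negP => /eqP e; move: (before_n _ hi); rewrite /common_reach reach_k e reach_j.
Qed.

Lemma connection_resistance n m (a b : 'I_#|S|) :
  shortest_to_common A k j k n -> shortest_to_common A k j j m ->
  enum_val a = k -> enum_val b = j ->
  resistance_is (subadj A S E) a b (resistance_formula R n m).
Proof.
move=> hk hj ha hb.
pose par (x : 'I_#|S|) := enum_rank_in r_in (tree_par (enum_val x)).
pose root := enum_rank_in r_in r.
have val_par x : enum_val (par x) = tree_par (enum_val x).
  by rewrite enum_rankK_in // tree_par_in // enum_valP.
have val_root : enum_val root = r by rewrite enum_rankK_in.
have val_iter t x : enum_val (iter t par x) = iter t tree_par (enum_val x).
  by elim: t => // t IH; rewrite !iterS val_par IH.
have rootE x : (x == root) = (enum_val x == r).
  by rewrite -(inj_eq enum_val_inj) val_root.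
have [meet n_le m_le disj] := first_meeting hk hj.
apply: (@tree_resistance R #|S| (subadj A S E) root par _ _ (tree_depth \o enum_val)).
- move=> x i; rewrite /subadj mxE rootE.
  case hE: (E (enum_val x) (enum_val i)).
    have [ei xr] := edge_tree_par hE.
    by rewrite E_unit // xr -(inj_eq enum_val_inj) val_par -ei eqxx.
  case: (eqVneq (enum_val x) r) => //= hx; case: (eqVneq i (par x)) => //= ei.
  by move: hE; rewrite ei val_par tree_par_edge ?enum_valP.
- by apply: enum_val_inj; rewrite val_par val_root tree_par_root.
- by rewrite /= val_root tree_depth_root.
- by move=> x; rewrite rootE /= val_par; apply: tree_depth_par; apply: enum_valP.
- by apply: enum_val_inj; rewrite !val_iter ha hb.
- by rewrite /= ha.
- by rewrite /= hb.
- by move=> i l hi hl; rewrite -(inj_eq enum_val_inj) !val_iter ha hb disj.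
Qed.
End ConnectionTree.

Theorem theorem3 (R : rcfType) (N : nat) (A : 'M[R]_N) (k j : 'I_N) (n m : nat) :
  (forall a b, 0 <= A a b) ->
  k != j ->
  directed_tree (conn_nodes A k j) (conn_rel A k j) ->
  (forall a b, conn_rel A k j a b -> A a b = 1) ->
  shortest_to_common A k j k n ->
  shortest_to_common A k j j m ->
  forall a b : 'I_#|conn_nodes A k j|,
    enum_val a = k -> enum_val b = j ->
    resistance_is (subadj A (conn_nodes A k j) (conn_rel A k j)) a b
      (resistance_formula R n m).
Proof.
move=> _ _ [E_nodes [r r_in [r_sink out_one reach_r]]] E_unit hk hj a b ha hb.
have k_in : k \in conn_nodes A k j by have := enum_valP a; rewrite ha.
have j_in : j \in conn_nodes A k j by have := enum_valP b; rewrite hb.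
exact: (connection_resistance E_nodes r_in r_sink out_one reach_r E_unit
  k_in j_in hk hj ha hb).
Qed.
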